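(* Let $\kappa$ be a regular infinite cardinal and let $\langle W^\kappa,(T_i)_{i\in\{a,b\}},\theta\rangle$ be the $*$-type space described in the context. Let $\alpha\le\kappa$ and $w^\kappa,u^\kappa\in W^\kappa$ with $w^\kappa\upharpoonright\alpha=u^\kappa\upharpoonright\alpha$. Then for every $\kappa$-expression $\varphi$ with $\mathrm{dp}(\varphi)\le\alpha$: $w^\kappa\in\varphi^{W^\kappa}$ iff $u^\kappa\in\varphi^{W^\kappa}$.
   Context: Records: for $\alpha\ge1$, a record of length $\alpha$ is $r=(r(\beta))_{\beta<\alpha}\in\{0,1\}^\alpha$ such that for every limit $\lambda\le\alpha$ there is $\gamma<\lambda$ with $r(\beta)=0$ for $\gamma\le\beta<\lambda$. Parity: finite ordinals usual (0 even); infinite $\hat\lambda+n$ ($\hat\lambda$ limit) has the parity of $n$. For limit $\lambda\le\alpha$, $o^\lambda(r)$ is the least ordinal $<\lambda$ after which $r$ is $0$ below $\lambda$; $\lambda\text{-par}(r)$ is its parity. $W^0=\{h,t\}$, $W^\alpha$ ($\alpha\ge1$) = triples $(w_0,w_a^\alpha,w_b^\alpha)$ with $w_0\in\{h,t\}$, $w_a^\alpha,w_b^\alpha$ records of length $\alpha$; $w^\alpha\upharpoonright\beta$ restricts both records to $\beta$ (and $w^\alpha\upharpoonright 0=w_0$); $\pi_{\beta,\alpha}(w^\alpha)=w^\alpha\upharpoonright\beta$. For $i\in\{a,b\}$, $j$ the other player, $P_i(w^\alpha)$ is the set of $v^\alpha\in W^\alpha$ with $v_i^\alpha=w_i^\alpha$;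 $w_i^\alpha(0)=1\Rightarrow v_0=w_0$; $w_i^\alpha(\beta+1)=1\Rightarrow v_j^\alpha(\beta)=w_j^\alpha(\beta)$ for $\beta+1<\alpha$; $w_i^\alpha(\lambda)=1\Rightarrow\lambda\text{-par}(v_j^\alpha)=\lambda\text{-par}(w_j^\alpha)$ for limit $\lambda<\alpha$. $T_a,T_b:W^\kappa\to\{$finitely additive probability measures on $\mathrm{Pow}(W^\kappa)\}$ are functions (which exist) satisfying for all $w^\kappa$: (a) $T_i$ constant on $P_i(w^\kappa)$; (b) $T_i(w^\kappa)(P_i(w^\kappa))=1$; (c) $T_i(w^\kappa)(\{u:u_0=w_0\})=1$ if $w_i^\kappa(0)=1$, $=\frac12$ otherwise; (d) for $\beta<\kappa$, $T_i(w^\kappa)(\{u:u_j^\kappa(\beta)=w_j^\kappa(\beta)\})=1$ if $w_i^\kappa(\beta+1)=1$, $=\frac12$ otherwise; (e) for limit $\lambda<\kappa$, $T_i(w^\kappa)(\{u:\lambda\text{-par}(u_j^\kappa)=\lambda\text{-par}(w_j^\kappa)\})=1$ if $w_i^\kappa(\lambda)=1$, $=\frac12$ otherwise; (f) for $0\le\beta<\alpha<\kappa$, $E^\beta\subseteq W^\beta$, $u^\kappa\upharpoonright\alpha=w^\kappa\upharpoonright\alpha$ implies $T_i(u^\kappa)(\pi^{-1}_{\beta,\kappa}(E^\beta))=T_i(w^\kappa)(\pi^{-1}_{\beta,\kappa}(E^\beta))$. $\theta(w^\kappa)=w_0$. This is a $*$-type space on $S=\{h,t\}$ for players $\{a,b\}$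 (all subsets measurable). $\kappa$-expressions over $\Sigma_S=\mathrm{Pow}(\{h,t\})$, $I=\{a,b\}$: least set containing each $E\subseteq\{h,t\}$ and closed under $\neg$, $B_i^p$ ($p\in[0,1]$), and conjunctions of fewer than $\kappa$ (nonempty) expressions. Semantics: $E^{W^\kappa}=\theta^{-1}(E)$, complement, $(B_i^p\varphi)^{W^\kappa}=\{w:T_i(w)(\varphi^{W^\kappa})\ge p\}$, intersection. Depth: $\mathrm{dp}(E)=0$, $\mathrm{dp}(\neg\varphi)=\mathrm{dp}(\varphi)$, $\mathrm{dp}(B_i^p\varphi)=\mathrm{dp}(\varphi)+1$, $\mathrm{dp}(\bigwedge_{\varphi\in\Psi}\varphi)=\sup_{\varphi\in\Psi}\mathrm{dp}(\varphi)$. *)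

(* Ordinals below kappa are modelled by a type K with a strict
   boolean well-order [lt]; the ordinal kappa itself is the order type of K.
   Ordinals <= kappa are [option K] with [None] = kappa. *)
From Stdlib Require Import Reals Bool.
Open Scope R_scope.

Inductive coin := heads | tails.
Inductive player := pa | pb.
Definition other (i : player) : player := match i with pa => pb | pb => pa end.

Section Ord.
Context {K : Type} (lt : K -> K -> bool).

Definition injective_fun {A B : Type} (g : A -> B) : Prop :=
  forall x y, g x = g y -> x = y.

Definition regular_infinite_cardinal : Prop :=
  (forall x, lt x x = false) /\
  (forall x y z, lt x y = true -> lt y z = true -> lt x z = true) /\
  (forall x y, lt x y = true \/ x = y \/ lt y x = true) /\
  well_founded (fun x y => lt x y = true) /\
  (exists f : nat -> K, injective_fun f) /\
  (forall x, ~ exists g : K -> {y : K | lt y x = true}, injective_fun g) /\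
  (* regular: every subset of cardinality < kappa is bounded below kappa *)
  (forall S : K -> Prop,
     ~ (exists g : K -> {y : K | S y}, injective_fun g) ->
     exists z, forall y, S y -> lt y z = true).

Definition lt_opt (x : K) (a : option K) : bool :=
  match a with None => true | Some b => lt x b end.

Definition is_zero (z : K) : Prop := forall x, lt x z = false.
Definition is_succ_of (b s : K) : Prop :=
  lt b s = true /\ forall x, lt b x = true -> lt x s = false.
Definition is_limit (l : K) : Prop :=
  ~ is_zero l /\ forall b, lt b l = true -> exists c, lt b c = true /\ lt c l = true.

(* [iter_succ b n x] : x = b + n *)
Fixpoint iter_succ (b : K) (n : nat) (x : K) : Prop :=
  match n with
  | O => x = b
  | S m => exists y, iter_succ b m y /\ is_succ_of y x
  end.

(* parity: finite ordinals as usual, lambda + n has the parity of n *)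
Definition ord_even (x : K) : Prop :=
  exists b n, (is_zero b \/ is_limit b) /\ iter_succ b n x /\ Nat.even n = true.

Definition zero_on (r : K -> bool) (g l : K) : Prop :=
  forall x, lt x g = false -> lt x l = true -> r x = false.

Definition is_o (l : K) (r : K -> bool) (g : K) : Prop :=
  lt g l = true /\ zero_on r g l /\
  forall g', lt g' l = true -> zero_on r g' l -> lt g' g = false.

Definition lam_even (l : K) (r : K -> bool) : Prop :=
  exists g, is_o l r g /\ ord_even g.

(* records of length kappa (limits l <= kappa, incl. kappa itself) *)
Definition valid_rec (r : K -> bool) : Prop :=
  (forall l, is_limit l -> exists g, lt g l = true /\ zero_on r g l) /\
  (exists g, forall x, lt x g = false -> r x = false).

Definition Tr : Type := (coin * (K -> bool) * (K -> bool))%type.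
Definition c0 (x : Tr) : coin := fst (fst x).
Definition rec_t (i : player) (x : Tr) : K -> bool :=
  match i with pa => snd (fst x) | pb => snd x end.

Definition W : Type := {x : Tr | valid_rec (rec_t pa x) /\ valid_rec (rec_t pb x)}.
Definition w0 (w : W) : coin := c0 (proj1_sig w).
Definition recw (i : player) (w : W) : K -> bool := rec_t i (proj1_sig w).

Definition restr_eq (a : option K) (w u : W) : Prop :=
  w0 w = w0 u /\
  forall x, lt_opt x a = true -> recw pa w x = recw pa u x /\ recw pb w x = recw pb u x.

(* restriction to beta, records padded with 0 at positions >= beta
   (canonical representation of W^beta inside Tr) *)
Definition trunc (b : K) (x : Tr) : Tr :=
  (c0 x, fun g => lt g b && rec_t pa x g, fun g => lt g b && rec_t pb x g).

Definition Pset (i : player) (w v : W) : Prop :=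
  let j := other i in
  (forall x, recw i v x = recw i w x) /\
  (forall z, is_zero z -> recw i w z = true -> w0 v = w0 w) /\
  (forall b s, is_succ_of b s -> recw i w s = true -> recw j v b = recw j w b) /\
  (forall l, is_limit l -> recw i w l = true ->
      (lam_even l (recw j v) <-> lam_even l (recw j w))).

Definition fa_prob (mu : (W -> Prop) -> R) : Prop :=
  (forall A, 0 <= mu A) /\ mu (fun _ => True) = 1 /\
  (forall A B, (forall x, A x -> B x -> False) ->
     mu (fun x => A x \/ B x) = mu A + mu B).

Definition half_or_one (b : bool) : R := if b then 1 else / 2.

Definition star_type_space (T : player -> W -> (W -> Prop) -> R) : Prop :=
  forall i, let j := other i in
  (forall w, fa_prob (T i w)) /\
  (forall w v, Pset i w v -> T i v = T i w) /\
  (forall w, T i w (Pset i w) = 1) /\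
  (forall w z, is_zero z ->
               T i w (fun u => w0 u = w0 w) = half_or_one (recw i w z)) /\
  (forall w b s, is_succ_of b s ->
               T i w (fun u => recw j u b = recw j w b) = half_or_one (recw i w s)) /\
  (forall w l, is_limit l ->
               T i w (fun u => lam_even l (recw j u) <-> lam_even l (recw j w))
               = half_or_one (recw i w l)) /\
  (forall b a, lt b a = true -> forall (E : Tr -> Prop) (u w : W),
               restr_eq (Some a) u w ->
               T i u (fun v => E (trunc b (proj1_sig v)))
               = T i w (fun v => E (trunc b (proj1_sig v)))).

End Ord.

(* kappa-expressions; a conjunction is indexed by a subset S of K
   (any set of < kappa expressions can be so indexed) *)
Inductive expr (K : Type) : Type :=
| Atom (E : coin -> bool)
| Neg (e : expr K)
| Bel (i : player) (p : R) (e : expr K)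
| Conj (SS : K -> Prop) (f : K -> expr K).
Arguments Atom {K} E.
Arguments Neg {K} e.
Arguments Bel {K} i p e.
Arguments Conj {K} SS f.

Section Expr.
Context {K : Type} (lt : K -> K -> bool).

Fixpoint wf (e : expr K) : Prop :=
  match e with
  | Atom _ => True
  | Neg e => wf e
  | Bel _ p e => 0 <= p <= 1 /\ wf e
  | Conj SS f => (exists x, SS x) /\
                (~ exists g : K -> {y : K | SS y}, injective_fun g) /\
                (forall x, SS x -> wf (f x))
  end.

(* dp(e) <= a, for an ordinal a <= kappa:
   dp(B e) = dp e + 1 <= a  iff  dp e <= b for some b < a;
   sup of depths <= a iff each is <= a *)
Fixpoint dp_le (e : expr K) (a : option K) : Prop :=
  match e with
  | Atom _ => True
  | Neg e => dp_le e a
  | Bel _ _ e => exists b, lt_opt lt b a = true /\ dp_le e (Some b)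
  | Conj SS f => forall x, SS x -> dp_le (f x) a
  end.

Fixpoint sem (T : player -> W lt -> (W lt -> Prop) -> R) (e : expr K) (w : W lt) : Prop :=
  match e with
  | Atom E => E (w0 lt w) = true
  | Neg e => ~ sem T e w
  | Bel i p e => T i w (sem T e) >= p
  | Conj SS f => forall x, SS x -> sem T (f x) w
  end.

End Expr.

(* By induction on the expression: for every ordinal a < kappa, the truth of
   an expression of depth <= a at w depends only on w |` a.  Atoms read only
   w0, and negation and conjunction preserve the claim.  For B_i^p phi of
   depth <= a we have dp(phi) <= b for some b < a, so by induction the event of
   phi is the preimage of a set of restrictions to b; condition (f) then makes
   T_i(w) and T_i(u) agree on it.  For a = kappa the restriction is w itself. *)
From Stdlib Require Import Reals.
From Stdlib Require Import FunctionalExtensionality PropExtensionality ProofIrrelevance.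
Open Scope R_scope.

Section Restriction.
Context {K : Type} (lt : K -> K -> bool).

Lemma restr_eq_trunc (b : K) (v v' : W lt) :
  trunc lt b (proj1_sig v) = trunc lt b (proj1_sig v') -> restr_eq lt (Some b) v v'.
Proof.
  destruct v as [[[c ra] rb] hv], v' as [[[c' ra'] rb'] hv'].
  unfold trunc, restr_eq, w0, recw; simpl.
  intro Htr; injection Htr as Hc Hra Hrb.
  split; [exact Hc |].
  intros x Hx.
  apply (f_equal (fun r => r x)) in Hra, Hrb; simpl in Hra, Hrb.
  rewrite Hx in Hra, Hrb; auto.
Qed.

Lemma restr_eq_kappa (w u : W lt) : restr_eq lt None w u -> w = u.
Proof.
  destruct w as [[[c ra] rb] hw], u as [[[c' ra'] rb'] hu].
  unfold restr_eq, w0, recw, c0; simpl.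
  intros [Hc Hrec]; subst c'.
  assert (ra = ra') as <-
    by (apply functional_extensionality; intro x; exact (proj1 (Hrec x eq_refl))).
  assert (rb = rb') as <-
    by (apply functional_extensionality; intro x; exact (proj2 (Hrec x eq_refl))).
  f_equal; apply proof_irrelevance.
Qed.

(* Take E to be the image of A under [trunc b]. *)
Lemma restr_invariant_trunc_preimage (b : K) (A : W lt -> Prop) :
  (forall v v', restr_eq lt (Some b) v v' -> A v -> A v') ->
  exists E : Tr -> Prop, A = fun v => E (trunc lt b (proj1_sig v)).
Proof.
  intro HA.
  exists (fun x => exists v', trunc lt b (proj1_sig v') = x /\ A v').
  apply functional_extensionality; intro v; apply propositional_extensionality.
  split.
  - intro Hv; exists v; auto.
  - intros [v' [Htr Hv']]; exact (HA v' v (restr_eq_trunc b v' v Htr) Hv').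
Qed.

End Restriction.

Section DepthInvariance.
Context {K : Type} (lt : K -> K -> bool).
Variable T : player -> W lt -> (W lt -> Prop) -> R.

Hypothesis T_trunc_local :
  forall i b a, lt b a = true -> forall (E : Tr -> Prop) (u w : W lt),
    restr_eq lt (Some a) u w ->
    T i u (fun v => E (trunc lt b (proj1_sig v)))
    = T i w (fun v => E (trunc lt b (proj1_sig v))).

Lemma sem_restr_invariant (phi : expr K) :
  forall (a : K) (w u : W lt), restr_eq lt (Some a) w u -> dp_le lt phi (Some a) ->
  (sem lt T phi w <-> sem lt T phi u).
Proof.
  induction phi as [E | e IH | i p e IH | SS f IH]; intros a w u Hwu Hdp;
    cbn [sem dp_le] in Hdp |- *.
  - destruct Hwu as [Hc _]; rewrite Hc; tauto.
  - specialize (IH a w u Hwu Hdp); tauto.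
  - destruct Hdp as [b [Hba Hdp]].
    destruct (restr_invariant_trunc_preimage lt b (sem lt T e)) as [E HE].
    { intros v v' Hvv'; exact (proj1 (IH b v v' Hvv' Hdp)). }
    rewrite HE, (T_trunc_local i b a Hba E w u Hwu); tauto.
  - split; intros Hf x Hx.
    + apply (IH x a w u Hwu (Hdp x Hx)); auto.
    + apply (IH x a w u Hwu (Hdp x Hx)); auto.
Qed.

End DepthInvariance.

Theorem lemma7 (K : Type) (lt : K -> K -> bool)
  (HK : regular_infinite_cardinal lt)
  (T : player -> W lt -> (W lt -> Prop) -> R)
  (HT : star_type_space lt T)
  (alpha : option K) (w u : W lt)
  (Hwu : restr_eq lt alpha w u)
  (phi : expr K) (Hwf : wf phi) (Hdp : dp_le lt phi alpha) :
  sem lt T phi w <-> sem lt T phi u.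
Proof.
  destruct alpha as [a |].
  - apply (sem_restr_invariant lt T) with a; [| exact Hwu | exact Hdp].
    intros i; apply (HT i).
  - rewrite (restr_eq_kappa lt w u Hwu); reflexivity.
Qed.
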